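(* For an idempotent semiring $S$ the following are equivalent: (1) $S$ satisfies $x\approx xyx+x+xyx$ (equivalently, $\mathcal{D}^{\bullet}$ is the least distributive lattice congruence on $S$); (2) $S$ satisfies both identities $xz\approx xz+xyz$ and $xz\approx xyz+xz$; (3) $S$ satisfies $xz\approx xyz+xz+xyz$.
   Context: An idempotent semiring is an algebra $(S,+,\cdot)$ with $(S,+)$, $(S,\cdot)$ bands and both distributive laws; addition not assumed commutative. $a\,\mathcal{D}^{\bullet}\,b$ iff $aba=a$ and $bab=b$. A distributive lattice congruence is a congruence $\rho$ with $S/\rho$ satisfying $x+y\approx y+x$, $xy\approx yx$, $x+xy\approx x$. *)

(* An idempotent semiring: (S,+), (S,.) are bands (idempotent semigroups),
   and both distributive laws hold. Addition is NOT assumed commutative. *)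
Record is_idem_semiring {S : Type} (add mul : S -> S -> S) : Prop := {
  add_assoc : forall x y z, add x (add y z) = add (add x y) z;
  add_idem  : forall x, add x x = x;
  mul_assoc : forall x y z, mul x (mul y z) = mul (mul x y) z;
  mul_idem  : forall x, mul x x = x;
  mul_distl : forall x y z, mul x (add y z) = add (mul x y) (mul x z);
  mul_distr : forall x y z, mul (add x y) z = add (mul x z) (mul y z)
}.

From Stdlib Require Import Setoid.

(* Write [e <= f] for [e + f = e = f + e], the natural order of the band
   [(S, +)]; in a band [e = f + e + f] iff [e <= f], so (1) says [x <= xyx] and
   (2), (3) both say [xz <= xyz], and the order is compatible with
   multiplication on either side.  Hence (2) implies (1) by taking [z = x].
   Conversely, since reversing [+] preserves (1), it is enough to show
   [xz + xyz = xz].  With [a = xz] and [b = xyz], the sandwich (1) at [x + z],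
   multiplied by [x] on the left and [z] on the right, expands to
   [a + b + xzyz = a] once the summands absorbed by [a] are dropped; and (1) at
   [a + b], whose sandwich [(a + b) a (a + b)] collapses to [a], gives
   [a + b + a = a + b].  So [a + b = a + b + xzyz + a = a]. *)

Definition band_le {S : Type} (op : S -> S -> S) (e f : S) : Prop :=
  op e f = e /\ op f e = e.

Lemma band_le_flip {S : Type} (op : S -> S -> S) (e f : S) :
  band_le (fun u v => op v u) e f <-> band_le op e f.
Proof. unfold band_le. tauto. Qed.

Section Band.

Variables (S : Type) (op : S -> S -> S).
Hypothesis op_assoc : forall x y z, op x (op y z) = op (op x y) z.
Hypothesis op_idem : forall x, op x x = x.

Lemma band_le_sandwich (e f : S) : band_le op e f <-> e = op (op f e) f.
Proof.
  split.
  - intros [ef fe]. rewrite fe. symmetry. exact ef.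
  - intros E. split.
    + rewrite E at 1. rewrite <- op_assoc, op_idem. symmetry. exact E.
    + rewrite E at 1. rewrite !op_assoc, op_idem. symmetry. exact E.
Qed.

End Band.

Section IdemSemiring.

Variables (S : Type) (add mul : S -> S -> S).
Hypothesis HS : is_idem_semiring add mul.

Lemma band_le_mull (c e f : S) :
  band_le add e f -> band_le add (mul c e) (mul c f).
Proof.
  intros [ef fe]. split; rewrite <- (mul_distl _ _ HS); congruence.
Qed.

Lemma band_le_mulr (c e f : S) :
  band_le add e f -> band_le add (mul e c) (mul f c).
Proof.
  intros [ef fe]. split; rewrite <- (mul_distr _ _ HS); congruence.
Qed.

Lemma is_idem_semiring_flip : is_idem_semiring (fun u v => add v u) mul.
Proof.
  destruct HS. constructor; intros; auto.
Qed.

Lemma mul_add_sandwich (a b : S) :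
  add a (mul a b) = a -> add a (mul b a) = a ->
  mul (mul (add a b) a) (add a b) = a.
Proof.
  intros aab aba.
  rewrite (mul_distr _ _ HS), (mul_idem _ _ HS), aba.
  rewrite (mul_distl _ _ HS), (mul_idem _ _ HS), aab.
  reflexivity.
Qed.

Section Sandwich.

Hypothesis le_sandwich : forall x y : S, band_le add x (mul (mul x y) x).

Lemma add_mul_sandwich_l (x y z : S) :
  add (mul x z) (mul (mul x y) z) = mul x z.
Proof.
  destruct HS as [aA aI mA mI dl dr].
  assert (le_t1 : band_le add (mul x z) (mul (mul (mul x y) x) z)).
  { exact (band_le_mulr z _ _ (le_sandwich x y)). }
  assert (le_t3 : band_le add (mul x z) (mul (mul (mul (mul x z) y) x) z)).
  { rewrite <- mA. exact (le_sandwich (mul x z) y). }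
  assert (le_t4 : band_le add (mul x z) (mul (mul (mul x z) y) z)).
  { pose proof (band_le_mull x _ _ (le_sandwich z y)) as H.
    rewrite ?mA in H. exact H. }
  assert (aab : add (mul x z) (mul (mul x z) (mul (mul x y) z)) = mul x z).
  { pose proof (band_le_mull x _ _ (le_sandwich z (mul x y))) as [H _].
    rewrite !mA in H. rewrite !mA. exact H. }
  assert (aba : add (mul x z) (mul (mul (mul x y) z) (mul x z)) = mul x z).
  { pose proof (band_le_mulr z _ _ (le_sandwich x (mul y z))) as [H _].
    rewrite !mA in H. rewrite !mA. exact H. }
  (* [x (x + z) z = x z], so this is the sandwich at [x + z], expanded. *)
  assert (le_P : band_le add (mul x z)
            (add (add (mul (mul (mul x y) x) z) (mul (mul (mul (mul x z) y) x) z))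
                 (add (mul (mul x y) z) (mul (mul (mul x z) y) z)))).
  { pose proof (band_le_mulr z _ _ (band_le_mull x _ _ (le_sandwich (add x z) y))) as H.
    repeat rewrite ?dl, ?dr in H. rewrite ?mA, ?mI, <- !(mA _ z z), mI, aI in H.
    exact H. }
  set (t4 := mul (mul (mul x z) y) z) in *.
  set (a := mul x z) in *. set (b := mul (mul x y) z) in *.
  assert (absorb_t4 : add (add a b) t4 = a).
  { destruct le_P as [aP _]. rewrite !aA, (proj1 le_t1), (proj1 le_t3) in aP.
    exact aP. }
  assert (absorb_a : add (add a b) a = add a b).
  { pose proof (proj1 (le_sandwich (add a b) a)) as H.
    rewrite (mul_add_sandwich a b aab aba) in H. exact H. }
  rewrite <- absorb_a. rewrite <- (proj2 le_t4) at 2.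
  rewrite aA, absorb_t4. apply aI.
Qed.

End Sandwich.

End IdemSemiring.

Lemma band_le_mul_sandwich (S : Type) (add mul : S -> S -> S)
  (HS : is_idem_semiring add mul)
  (le_sandwich : forall x y : S, band_le add x (mul (mul x y) x)) (x y z : S) :
  band_le add (mul x z) (mul (mul x y) z).
Proof.
  split.
  - exact (add_mul_sandwich_l S add mul HS le_sandwich x y z).
  - apply (add_mul_sandwich_l S (fun u v => add v u) mul (is_idem_semiring_flip S add mul HS)).
    intros u w. apply band_le_flip, le_sandwich.
Qed.

Theorem lemma4p5 (S : Type) (add mul : S -> S -> S)
  (HS : is_idem_semiring add mul) :
  ((forall x y : S,
      x = add (add (mul (mul x y) x) x) (mul (mul x y) x))
   <->
   ((forall x y z : S, mul x z = add (mul x z) (mul (mul x y) z)) /\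
    (forall x y z : S, mul x z = add (mul (mul x y) z) (mul x z))))
  /\
  (((forall x y z : S, mul x z = add (mul x z) (mul (mul x y) z)) /\
    (forall x y z : S, mul x z = add (mul (mul x y) z) (mul x z)))
   <->
   (forall x y z : S,
      mul x z = add (add (mul (mul x y) z) (mul x z)) (mul (mul x y) z))).
Proof.
  pose proof (band_le_sandwich S add (add_assoc _ _ HS) (add_idem _ _ HS)) as sandwich.
  assert (iff1 : (forall x y : S, x = add (add (mul (mul x y) x) x) (mul (mul x y) x))
                 <-> forall x y : S, band_le add x (mul (mul x y) x)).
  { split; intros H x y; apply sandwich, H. }
  assert (iff2 : ((forall x y z : S, mul x z = add (mul x z) (mul (mul x y) z)) /\
                  (forall x y z : S, mul x z = add (mul (mul x y) z) (mul x z)))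
                 <-> forall x y z : S, band_le add (mul x z) (mul (mul x y) z)).
  { split.
    - intros [H1 H2] x y z. split; symmetry; auto.
    - intros H. split; intros x y z; symmetry; apply H. }
  assert (iff3 : (forall x y z : S,
                    mul x z = add (add (mul (mul x y) z) (mul x z)) (mul (mul x y) z))
                 <-> forall x y z : S, band_le add (mul x z) (mul (mul x y) z)).
  { split; intros H x y z; apply sandwich, H. }
  rewrite iff1, iff2, iff3.
  split; [split | reflexivity].
  - apply band_le_mul_sandwich, HS.
  - intros H x y. rewrite <- (mul_idem _ _ HS x) at 1. apply H.
Qed.
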